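(* Let $\mathcal{X}$ be a measurable space, $K\ge1$, and let classifiers be measurable maps $\mathcal{X}\to[K]$. Let $\mathcal{B}$ assign to each $x$ a set $\mathcal{B}(x)\subseteq\mathcal{X}$ and let $\mathcal{N}(V)=\{x:\exists x'\in V,\ \mathcal{B}(x)\cap\mathcal{B}(x')\neq\emptyset\}$. Let $Q$ be a probability measure on $\mathcal{X}$ satisfying the $c$-expansion property for a non-increasing $c:[0,1]\to(0,\infty)$, i.e. $Q(\mathcal{N}(S))\ge c(Q(S))Q(S)$ for every measurable $S$. Let $F,H,G_{pl}$ be classifiers, $\gamma_H=c(Q(\{x:G_{pl}(x)\neq H(x)\}))$, and assume $\gamma_H>1$. Let $\mathcal{S}_{\mathcal{B}}(F)=\{x:F(x)=F(x')\ \forall x'\in\mathcal{B}(x)\}$ (similarly for $H$), with complements $\mathcal{S}_{\mathcal{B}}^c(\cdot)$; let $\mathcal{M}(F)=\{x:F(x)\neq H(x)\}$, $\mathcal{M}(G_{pl})=\{x:G_{pl}(x)\neq H(x)\}$, $\mathcal{M}_{pl}(F)=\{x:F(x)\neq G_{pl}(x)\}$. Define $$q=\frac{Q\big(\mathcal{M}_{pl}(F)\cup\mathcal{S}_{\mathcal{B}}^c(F)\cup\mathcal{S}_{\mathcal{B}}^c(H)\big)}{\gamma_H-1}.$$ Then $Q\big(\mathcal{S}_{\mathcal{B}}(F)\cap\mathcal{S}_{\mathcal{B}}(H)\cap\mathcal{M}(G_{pl})\cap\mathcal{M}(F)\big)\le q$. In particular, with $\mathcal{N}_1=\{x\in\mathcal{S}_{\mathcal{B}}(F)\cap\mathcal{S}_{\mathcal{B}}(H):F(x)=G_{pl}(x),\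 G_{pl}(x)\neq H(x)\}$ and $\mathcal{N}_2=\{x\in\mathcal{S}_{\mathcal{B}}(F)\cap\mathcal{S}_{\mathcal{B}}(H):F(x)\neq G_{pl}(x),\ G_{pl}(x)\neq H(x),\ F(x)\neq H(x)\}$, we have $Q(\mathcal{N}_1\cup\mathcal{N}_2)\le q$.
   Context: All sets are assumed measurable. *)

From HB Require Import structures.
From mathcomp Require Import all_boot all_order all_algebra.
From mathcomp Require Import all_classical all_reals all_analysis.
Set Implicit Arguments. Unset Strict Implicit. Unset Printing Implicit Defensive.
Import Order.TTheory GRing.Theory Num.Theory.
Local Open Scope classical_set_scope.
Local Open Scope ring_scope.

(* A classifier X -> [K] is measurable (w.r.t. the discrete sigma-algebra on
   the finite label set 'I_K) iff every label class is measurable. *)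
Definition measurable_classifier (d : measure_display) (X : measurableType d)
  (K : nat) (F : X -> 'I_K) : Prop :=
  forall k : 'I_K, measurable (F @^-1` [set k]).

Definition nbhd_set (X : Type) (B : X -> set X) (V : set X) : set X :=
  [set x | exists x', V x' /\ (B x `&` B x' !=set0)].

Definition robust_set (X : Type) (K : nat) (B : X -> set X) (F : X -> 'I_K)
  : set X := [set x | forall x', B x x' -> F x = F x'].

From HB Require Import structures.
From mathcomp Require Import all_boot all_order all_algebra.
From mathcomp Require Import all_classical all_reals all_analysis.
Import Order.TTheory GRing.Theory Num.Theory.
Local Open Scope classical_set_scope.
Local Open Scope ring_scope.

(** Let A be the set of points robust for F and H on which F and G_pl both
   disagree with H.  A neighbour y of A that is robust for F and H shares a
   point of B with some x in A, so F and H take on y the values they take on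
   x; hence y lies in A unless F y <> G y.  So N(A) is covered by A and by the
   "defect" set U of the bound, and expansion of A gives
   c(Q A) Q A <= Q A + Q U.  Since A lies in M(G_pl) and c is non-increasing,
   c(Q A) >= gamma_H > 1, whence Q A <= Q U / (gamma_H - 1). *)

Lemma measurable_classifier_neq {d : measure_display} {X : measurableType d}
    {K : nat} {F1 F2 : X -> 'I_K} :
  measurable_classifier F1 -> measurable_classifier F2 ->
  measurable [set x | F1 x <> F2 x].
Proof.
move=> mF1 mF2.
have -> : [set x | F1 x <> F2 x] =
    ~` \bigcup_(k in [set: 'I_K]) (F1 @^-1` [set k] `&` F2 @^-1` [set k]).
  apply/seteqP; split => x /=.
    by move=> neq [k _ [/= e1 e2]]; apply: neq; rewrite e1 e2.
  by move=> nE eq12; apply: nE; exists (F1 x) => //; split => //=.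
apply/measurableC/fin_bigcup_measurable; first exact: finite_finset.
by move=> k _; apply: measurableI.
Qed.

Lemma nbhd_robust_mismatch_sub {X : Type} {K : nat} (B : X -> set X)
    (F H G : X -> 'I_K) :
  let A := robust_set B F `&` robust_set B H `&`
           [set x | G x <> H x] `&` [set x | F x <> H x] in
  nbhd_set B A `<=`
    A `|` ([set x | F x <> G x] `|` ~` robust_set B F `|` ~` robust_set B H).
Proof.
move=> A y [x [[[[SFx SHx] GHx] FHx] [z [Byz Bxz]]]].
have [SFy|] := pselect (robust_set B F y); last by right; left; right.
have [SHy|] := pselect (robust_set B H y); last by right; right.
have eF : F y = F x by rewrite (SFy z Byz) (SFx z Bxz).
have eH : H y = H x by rewrite (SHy z Byz) (SHx z Bxz).
have [eFG|] := eqVneq (F y) (G y); last by move/eqP; right; left; left.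
by left; split; [split; [split|]|] => //=; rewrite -?eFG eF eH.
Qed.

Lemma le_div_expansion_defect {R : realFieldType} (g ca a u : R) :
  0 <= a -> 1 < g -> g <= ca -> ca * a <= a + u -> a <= u / (g - 1).
Proof.
move=> a_ge0 g_gt1 g_le_ca exp_a.
rewrite ler_pdivlMr ?subr_gt0 // mulrBr mulr1 lerBlDl.
by apply: le_trans exp_a; rewrite mulrC ler_wpM2r.
Qed.

Lemma measure_le_expansion_defect {d : measure_display} {X : measurableType d}
    {R : realType} (Q : probability X R) {c : R -> R} {A M N U : set X} :
  (forall s t, 0 <= s -> s <= t -> t <= 1 -> c t <= c s) ->
  measurable A -> measurable M -> measurable N -> measurable U ->
  A `<=` M -> N `<=` A `|` U -> 1 < c (fine (Q M)) ->
  ((c (fine (Q A)))%:E * Q A <= Q N)%E ->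
  (Q A <= (fine (Q U) / (c (fine (Q M)) - 1))%:E)%E.
Proof.
move=> c_noninc mA mM mN mU AM NAU gamma_gt1 expA.
have QfinE (S : set X) : measurable S -> (fine (Q S))%:E = Q S.
  by move=> mS; apply/fineK/fin_num_measure.
rewrite -(QfinE A mA) lee_fin.
apply: (le_div_expansion_defect _ (c (fine (Q A)))) => //.
- by rewrite -lee_fin QfinE.
- apply: c_noninc; rewrite -lee_fin !QfinE //; last exact: probability_le1.
  by apply: le_measure; rewrite ?inE.
- rewrite -lee_fin EFinM EFinD !QfinE //.
  apply: (le_trans expA); apply: le_trans (measureU2 Q mA mU).
  by apply: le_measure; rewrite ?inE //; apply: measurableU.
Qed.

Theorem mainTheorem3 (d : measure_display) (X : measurableType d)
  (R : realType) (K : nat) (K_ge1 : (1 <= K)%N)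
  (B : X -> set X) (Q : probability X R) (c : R -> R)
  (c_pos : forall t, 0 <= t <= 1 -> 0 < c t)
  (c_noninc : forall s t, 0 <= s -> s <= t -> t <= 1 -> c t <= c s)
  (N_meas : forall S : set X, measurable S -> measurable (nbhd_set B S))
  (c_expansion : forall S : set X, measurable S ->
     ((c (fine (Q S)))%:E * Q S <= Q (nbhd_set B S))%E)
  (F H G : X -> 'I_K)
  (F_meas : measurable_classifier F) (H_meas : measurable_classifier H)
  (G_meas : measurable_classifier G)
  (SF_meas : measurable (robust_set B F))
  (SH_meas : measurable (robust_set B H))
  (gammaH_gt1 : 1 < c (fine (Q [set x | G x <> H x]))) :
  let gammaH := c (fine (Q [set x | G x <> H x])) in
  let SF := robust_set B F in
  let SH := robust_set B H in
  let q := (fine (Q ([set x | F x <> G x] `|` ~` SF `|` ~` SH)) / (gammaH - 1))%:E in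
  (Q (SF `&` SH `&` [set x | G x <> H x] `&` [set x | F x <> H x]) <= q)%E /\
  (let N1 := [set x | SF x /\ SH x /\ F x = G x /\ G x <> H x] in
   let N2 := [set x | SF x /\ SH x /\ F x <> G x /\ G x <> H x /\ F x <> H x] in
   Q (N1 `|` N2) <= q)%E.
Proof.
move=> gammaH SF SH q.
have mGH := measurable_classifier_neq G_meas H_meas.
have mFH := measurable_classifier_neq F_meas H_meas.
have mFG := measurable_classifier_neq F_meas G_meas.
set A := SF `&` SH `&` _ `&` _.
have mA : measurable A by do 3 apply: measurableI => //.
have QA_le_q : (Q A <= q)%E.
  apply: (measure_le_expansion_defect Q c_noninc mA mGH (N_meas _ mA)) => //.
  - by apply: measurableU; [apply: measurableU|]; rewrite //; apply: measurableC.
  - by move=> x [[_ ?] _].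
  - exact: nbhd_robust_mismatch_sub.
  - exact: c_expansion.
split => // N1 N2.
suff -> : N1 `|` N2 = A by [].
apply/seteqP; split => x /=.
  case=> [[SFx [SHx [FGx GHx]]]|[SFx [SHx [_ [GHx FHx]]]]] //.
  by split; [split; [split|] | rewrite /= FGx].
move=> [[[SFx SHx] GHx] FHx].
by have [FGx|/eqP FGx] := eqVneq (F x) (G x); [left|right].
Qed.
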